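(* Let $SI$, $UI$, $CI$ be a nonnegative bivariate information decomposition, let $\overline{SI}(S;X_1,X_2):=\sup_{f} SI(f(S);X_1,X_2)$ (supremum over all functions $f$ from the alphabet of $S$ to an arbitrary finite set), and let $\overline{UI}^*(S;X_1\setminus X_2):=I(S;X_1)-\overline{SI}(S;X_1,X_2)$. Suppose that $\overline{UI}^*(S;X_1\setminus X_2)=0$, and let $f^*$ be a function achieving the supremum defining $\overline{SI}(S;X_1,X_2)$. Then $X_1 - f^*(S) - S$ is a Markov chain (i.e. $X_1$ and $S$ are conditionally independent given $f^*(S)$), and $UI(f^*(S);X_1\setminus X_2)=0$.
   Context: All random variables have finite alphabets. A nonnegative bivariate information decomposition consists of nonnegative functions $SI(S;X_1,X_2)$, $UI(S;X_1\setminus X_2)$, $UI(S;X_2\setminus X_1)$, $CI(S;X_1,X_2)$, defined for every joint distribution of $(S,X_1,X_2)$ with arbitrary finite alphabets and depending continuously on it, such that $I(S;X_1X_2)=SI(S;X_1,X_2)+CI(S;X_1,X_2)+UI(S;X_1\setminus X_2)+UI(S;X_2\setminus X_1)$, $I(S;X_1)=SI(S;X_1,X_2)+UI(S;X_1\setminus X_2)$ and $I(S;X_2)=SI(S;X_1,X_2)+UI(S;X_2\setminus X_1)$, where $I$ denotes mutual information. *)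

From HB Require Import structures.
From mathcomp Require Import all_boot all_order all_algebra.
From mathcomp Require Import boolp classical_sets reals exp.
Set Implicit Arguments. Unset Strict Implicit. Unset Printing Implicit Defensive.
Import Order.TTheory GRing.Theory Num.Theory.
Local Open Scope ring_scope.

Section Defs.
Variable R : realType.

Definition is_dist (T : finType) (p : {ffun T -> R}) : Prop :=
  (forall t, 0 <= p t) /\ \sum_t p t = 1.

Definition margL (T U : finType) (q : {ffun T * U -> R}) (x : T) : R :=
  \sum_(u : U) q (x, u).
Definition margR (T U : finType) (q : {ffun T * U -> R}) (y : U) : R :=
  \sum_(t : T) q (t, y).
Definition MI (T U : finType) (q : {ffun T * U -> R}) : R :=
  \sum_(t : T * U)
     (if q t == 0 then 0 else q t * ln (q t / (margL q t.1 * margR q t.2))).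

(* From a joint distribution p of (S, X1, X2) on A * B1 * B2: *)
Definition joint_S_X1 (A B1 B2 : finType) (p : {ffun A * B1 * B2 -> R})
  : {ffun A * B1 -> R} := [ffun t => \sum_(x2 : B2) p (t.1, t.2, x2)].
Definition joint_S_X2 (A B1 B2 : finType) (p : {ffun A * B1 * B2 -> R})
  : {ffun A * B2 -> R} := [ffun t => \sum_(x1 : B1) p (t.1, x1, t.2)].
Definition joint_S_X12 (A B1 B2 : finType) (p : {ffun A * B1 * B2 -> R})
  : {ffun A * (B1 * B2) -> R} := [ffun t => p (t.1, t.2.1, t.2.2)].

Definition cont_on_dists (T : finType) (F : {ffun T -> R} -> R) : Prop :=
  forall p, is_dist p -> forall e : R, 0 < e ->
    exists2 d : R, 0 < d & forall q, is_dist q ->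
      (forall t, `|p t - q t| < d) -> `|F p - F q| < e.

Definition push (A B1 B2 C : finType) (f : A -> C) (p : {ffun A * B1 * B2 -> R})
  : {ffun C * B1 * B2 -> R} :=
  [ffun t => \sum_(a : A | f a == t.1.1) p (a, t.1.2, t.2)].

Definition cond_indep (T1 T2 T3 : finType) (q : {ffun T1 * T2 * T3 -> R}) : Prop :=
  forall x y z,
    q (x, y, z) * (\sum_(x' : T1) \sum_(y' : T2) q (x', y', z))
    = (\sum_(y' : T2) q (x, y', z)) * (\sum_(x' : T1) q (x', y, z)).

Definition joint_X1_S_fS (A B1 B2 C : finType) (f : A -> C)
  (p : {ffun A * B1 * B2 -> R}) : {ffun B1 * A * C -> R} :=
  [ffun t => if f t.1.2 == t.2 then \sum_(x2 : B2) p (t.1.2, t.1.1, x2) else 0].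

Definition markov_X1_fS_S (A B1 B2 C : finType) (f : A -> C)
  (p : {ffun A * B1 * B2 -> R}) : Prop :=
  cond_indep (joint_X1_S_fS f p).

Record nonneg_PID := NonnegPID {
  SI : forall A B1 B2 : finType, {ffun A * B1 * B2 -> R} -> R;
  UI1 : forall A B1 B2 : finType, {ffun A * B1 * B2 -> R} -> R;
  UI2 : forall A B1 B2 : finType, {ffun A * B1 * B2 -> R} -> R;
  CI : forall A B1 B2 : finType, {ffun A * B1 * B2 -> R} -> R;
  SI_ge0 : forall (A B1 B2 : finType) (p : {ffun A * B1 * B2 -> R}), is_dist p -> 0 <= @SI A B1 B2 p;
  UI1_ge0 : forall (A B1 B2 : finType) (p : {ffun A * B1 * B2 -> R}), is_dist p -> 0 <= @UI1 A B1 B2 p;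
  UI2_ge0 : forall (A B1 B2 : finType) (p : {ffun A * B1 * B2 -> R}), is_dist p -> 0 <= @UI2 A B1 B2 p;
  CI_ge0 : forall (A B1 B2 : finType) (p : {ffun A * B1 * B2 -> R}), is_dist p -> 0 <= @CI A B1 B2 p;
  SI_cont : forall A B1 B2, cont_on_dists (@SI A B1 B2);
  UI1_cont : forall A B1 B2, cont_on_dists (@UI1 A B1 B2);
  UI2_cont : forall A B1 B2, cont_on_dists (@UI2 A B1 B2);
  CI_cont : forall A B1 B2, cont_on_dists (@CI A B1 B2);
  PID_full : forall (A B1 B2 : finType) (p : {ffun A * B1 * B2 -> R}), is_dist p ->
    MI (joint_S_X12 p) = @SI A B1 B2 p + @CI A B1 B2 p + @UI1 A B1 B2 p + @UI2 A B1 B2 p;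
  PID_X1 : forall (A B1 B2 : finType) (p : {ffun A * B1 * B2 -> R}), is_dist p ->
    MI (joint_S_X1 p) = @SI A B1 B2 p + @UI1 A B1 B2 p;
  PID_X2 : forall (A B1 B2 : finType) (p : {ffun A * B1 * B2 -> R}), is_dist p ->
    MI (joint_S_X2 p) = @SI A B1 B2 p + @UI2 A B1 B2 p
}.

Definition SIbar (d : nonneg_PID) (A B1 B2 : finType) (p : {ffun A * B1 * B2 -> R}) : R :=
  sup [set r : R | exists (C : finType) (f : A -> C), r = SI d (push f p)].

Definition UIbar_star (d : nonneg_PID) (A B1 B2 : finType) (p : {ffun A * B1 * B2 -> R}) : R :=
  MI (joint_S_X1 p) - SIbar d p.

End Defs.

Arguments SI {R} _ {A B1 B2} _.
Arguments UI1 {R} _ {A B1 B2} _.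
Arguments UI2 {R} _ {A B1 B2} _.
Arguments CI {R} _ {A B1 B2} _.

From HB Require Import structures.
From mathcomp Require Import all_boot all_order all_algebra.
From mathcomp Require Import boolp classical_sets reals exp.
From mathcomp Require Import ring lra.
Set Implicit Arguments. Unset Strict Implicit. Unset Printing Implicit Defensive.
Import Order.TTheory GRing.Theory Num.Theory.
Local Open Scope ring_scope.

(* If UIbar* vanishes then I(S;X1) = SI(f*(S);X1,X2) <= I(f*(S);X1) <= I(S;X1):
   the first step because UI is nonnegative, the second by the data-processing
   inequality.  Hence UI(f*(S);X1\X2) = 0 and f*(S) keeps all the information S
   has about X1.  The equality case of data processing comes from Gibbs'
   inequality: I(S;X1) - I(f*(S);X1) is the relative entropy of the law of
   (S,X1) from the law obtained by redrawing X1 given f*(S), so it vanishes only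
   when X1 is conditionally independent of S given f*(S). *)

Section RelativeEntropy.
Variable R : realType.

Lemma ln_lt_subr1 (y : R) : 0 < y -> y != 1 -> ln y < y - 1.
Proof.
move=> y_gt0 y_neq1; have lny_neq0 : ln y != 0 by rewrite ln_eq0.
by have := expR_gt1Dx lny_neq0; rewrite lnK ?posrE // ltrBrDl.
Qed.

Definition rel_entr (x y : R) : R := if x == 0 then 0 else x * ln (x / y).

Lemma rel_entrE (x y : R) : rel_entr x y = x * ln (x / y).
Proof. by rewrite /rel_entr; case: eqP => [->|]; rewrite ?mul0r. Qed.

Lemma rel_entrxx (x : R) : rel_entr x x = 0.
Proof.
by rewrite /rel_entr; case: eqP => // /eqP x_neq0; rewrite divff // ln1 mulr0.
Qed.

Section Gibbs.
Variables (x y : R).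
Hypotheses (x_ge0 : 0 <= x) (y_ge0 : 0 <= y) (abs_cont : 0 < x -> 0 < y).

Lemma subr_lt_rel_entr : x != y -> x - y < rel_entr x y.
Proof.
move=> x_neq_y; rewrite rel_entrE.
have := x_ge0; rewrite le0r => /predU1P[x0|x_gt0].
  by rewrite x0 mul0r sub0r oppr_lt0 lt_def y_ge0 andbT eq_sym -x0.
have yx_gt0 : 0 < y / x by rewrite divr_gt0 ?abs_cont.
have yx_neq1 : y / x != 1.
  by apply: contra_neq x_neq_y => /divr1_eq ->.
have := ln_lt_subr1 yx_gt0 yx_neq1; rewrite -(ltr_pM2l x_gt0).
have -> : ln (x / y) = - ln (y / x) by rewrite -lnV ?posrE // invf_div.
have -> : x * (y / x - 1) = y - x by field; rewrite lt0r_neq0.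
lra.
Qed.

Lemma subr_le_rel_entr : x - y <= rel_entr x y.
Proof.
have [<-|x_neq_y] := eqVneq x y; first by rewrite subrr rel_entrxx.
exact/ltW/subr_lt_rel_entr.
Qed.
End Gibbs.

Section GibbsSum.
Variables (T : finType) (w v : T -> R).
Hypotheses (w_ge0 : forall t, 0 <= w t) (v_ge0 : forall t, 0 <= v t).
Hypothesis abs_cont : forall t, 0 < w t -> 0 < v t.

Lemma gibbs_ineq : \sum_t w t - \sum_t v t <= \sum_t rel_entr (w t) (v t).
Proof.
rewrite -sumrB; apply: ler_sum => t _.
exact: subr_le_rel_entr (w_ge0 t) (v_ge0 t) (@abs_cont t).
Qed.

Lemma gibbs_eq : \sum_t rel_entr (w t) (v t) = \sum_t w t - \sum_t v t ->
  forall t, w t = v t.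
Proof.
move=> gibbs_tight t.
have gap_ge0 s : 0 <= rel_entr (w s) (v s) - (w s - v s).
  by rewrite subr_ge0 (subr_le_rel_entr (w_ge0 s) (v_ge0 s) (@abs_cont s)).
have /(psumr_eq0P (fun s _ => gap_ge0 s))/(_ t isT) gap0 :
    \sum_s (rel_entr (w s) (v s) - (w s - v s)) = 0.
  by rewrite !sumrB gibbs_tight subrr.
have [//|wt_neq_vt] := eqVneq (w t) (v t).
have := subr_lt_rel_entr (w_ge0 t) (v_ge0 t) (@abs_cont t) wt_neq_vt.
by move/eqP: gap0; rewrite subr_eq0 => /eqP ->; rewrite ltxx.
Qed.
End GibbsSum.

Lemma ler_sum_term (I : finType) (P : pred I) (F : I -> R) i :
  (forall j, 0 <= F j) -> P i -> F i <= \sum_(j | P j) F j.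
Proof. by move=> F_ge0 Pi; rewrite (bigD1 i) //= lerDl sumr_ge0. Qed.

Lemma sumr_pair (T U : finType) (F : T * U -> R) :
  \sum_t F t = \sum_a \sum_x F (a, x).
Proof. by rewrite pair_big; apply: eq_big => -[]. Qed.

Section Marginals.
Variables (T U : finType) (r : {ffun T * U -> R}).

Lemma MI_rel_entr : MI r = \sum_t rel_entr (r t) (margL r t.1 * margR r t.2).
Proof. by []. Qed.

Hypothesis r_ge0 : forall t, 0 <= r t.

Lemma margL_ge0 a : 0 <= margL r a.
Proof. exact: sumr_ge0. Qed.

Lemma le_margL a x : r (a, x) <= margL r a.
Proof. by apply: (@ler_sum_term _ xpredT (fun u => r (a, u))). Qed.

Lemma le_margR a x : r (a, x) <= margR r x.
Proof. by apply: (@ler_sum_term _ xpredT (fun b => r (b, x))). Qed.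

End Marginals.

Section Coarsening.
Variables (A B C : finType) (f : A -> C) (q : {ffun A * B -> R}).

Definition coarsen : {ffun C * B -> R} :=
  [ffun t => \sum_(a | f a == t.1) q (a, t.2)].

Lemma margL_coarsen c : margL coarsen c = \sum_(a | f a == c) margL q a.
Proof. by rewrite /margL exchange_big; apply: eq_bigr => u _; rewrite ffunE. Qed.

Lemma margR_coarsen x : margR coarsen x = margR q x.
Proof.
rewrite /margR [RHS](partition_big f predT) //=.
by apply: eq_bigr => c _; rewrite ffunE.
Qed.

Lemma MI_coarsen : MI coarsen =
  \sum_t q t * ln (coarsen (f t.1, t.2) / (margL coarsen (f t.1) * margR q t.2)).
Proof.
rewrite MI_rel_entr !sumr_pair /=.
under eq_bigr => c _ do under eq_bigr => x _ do
  rewrite rel_entrE margR_coarsen {1}ffunE /= mulr_suml.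
under eq_bigr => c _ do rewrite exchange_big /=.
rewrite [RHS](partition_big f predT) //=.
by apply: eq_bigr => c _; apply: eq_bigr => a /eqP <-.
Qed.

(* X is independent of S given f(S), with denominators cleared. *)
Definition sufficient : Prop :=
  forall a x, q (a, x) * margL coarsen (f a) = coarsen (f a, x) * margL q a.

(* The law of (S, X') with X' drawn from the law of X given f(S). *)
Definition coarsen_lift (t : A * B) : R :=
  margL q t.1 * coarsen (f t.1, t.2) / margL coarsen (f t.1).

Hypothesis q_ge0 : forall t, 0 <= q t.

Lemma coarsen_ge0 t : 0 <= coarsen t.
Proof. by rewrite ffunE sumr_ge0. Qed.

Lemma le_coarsen a x : q (a, x) <= coarsen (f a, x).
Proof. by rewrite ffunE; apply: (@ler_sum_term _ _ (fun b => q (b, x))). Qed.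

Lemma margL_le_coarsen a : margL q a <= margL coarsen (f a).
Proof.
rewrite margL_coarsen; apply: (@ler_sum_term _ _ (margL q)) => //.
exact: margL_ge0.
Qed.

Lemma margL_coarsen_eq0 a : margL coarsen (f a) = 0 -> margL q a = 0.
Proof.
move=> PC0; apply/le_anti.
by rewrite (margL_ge0 q_ge0) andbT -PC0 margL_le_coarsen.
Qed.

Lemma coarsen_lift_ge0 t : 0 <= coarsen_lift t.
Proof.
by rewrite divr_ge0 ?mulr_ge0 ?coarsen_ge0 ?(margL_ge0 q_ge0)
  ?(margL_ge0 coarsen_ge0).
Qed.

Lemma coarsen_lift_gt0 t : 0 < q t -> 0 < coarsen_lift t.
Proof.
case: t => a x q_gt0.
have PS_gt0 := lt_le_trans q_gt0 (le_margL q_ge0 a x).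
rewrite divr_gt0 ?mulr_gt0 //; first exact: lt_le_trans q_gt0 (le_coarsen a x).
exact: lt_le_trans PS_gt0 (margL_le_coarsen a).
Qed.

Lemma sum_coarsen_lift : \sum_t coarsen_lift t = \sum_t q t.
Proof.
rewrite !sumr_pair; apply: eq_bigr => a _ /=.
rewrite /coarsen_lift /= -mulr_suml -mulr_sumr.
rewrite -/(margL coarsen (f a)) -/(margL q a).
have [/margL_coarsen_eq0 ->|PC_neq0] := eqVneq (margL coarsen (f a)) 0.
  by rewrite !mul0r.
by rewrite mulfK.
Qed.

Lemma MI_sub_coarsen :
  MI q - MI coarsen = \sum_t rel_entr (q t) (coarsen_lift t).
Proof.
rewrite MI_coarsen MI_rel_entr -sumrB; apply: eq_bigr => -[a x] _ /=.
rewrite !rel_entrE -mulrBr /coarsen_lift /=.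
have [->|q_neq0] := eqVneq (q (a, x)) 0; first by rewrite !mul0r.
have q_gt0 : 0 < q (a, x) by rewrite lt_def q_neq0 q_ge0.
have PS_gt0 := lt_le_trans q_gt0 (le_margL q_ge0 a x).
have PX_gt0 := lt_le_trans q_gt0 (le_margR q_ge0 a x).
have Q_gt0 := lt_le_trans q_gt0 (le_coarsen a x).
have PC_gt0 := lt_le_trans PS_gt0 (margL_le_coarsen a).
rewrite -ln_div ?posrE ?divr_gt0 ?mulr_gt0 //; congr (_ * ln _).
by field; rewrite !gt_eqF.
Qed.

Theorem MI_coarsen_le : MI coarsen <= MI q.
Proof.
rewrite -subr_ge0 MI_sub_coarsen.
have := gibbs_ineq q_ge0 coarsen_lift_ge0 coarsen_lift_gt0.
by rewrite sum_coarsen_lift subrr.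
Qed.

Lemma MI_coarsen_eq : MI coarsen = MI q -> sufficient.
Proof.
move=> MI_eq a x.
have tight : \sum_t rel_entr (q t) (coarsen_lift t)
           = \sum_t q t - \sum_t coarsen_lift t.
  by rewrite -MI_sub_coarsen MI_eq sum_coarsen_lift !subrr.
have := gibbs_eq q_ge0 coarsen_lift_ge0 coarsen_lift_gt0 tight (a, x).
rewrite /coarsen_lift /= => ->.
have [PC0|PC_neq0] := eqVneq (margL coarsen (f a)) 0.
  by rewrite PC0 (margL_coarsen_eq0 PC0) !mulr0.
by rewrite divfK // mulrC.
Qed.

End Coarsening.
End RelativeEntropy.

Section Pushforward.
Variables (R : realType) (A B1 B2 C : finType) (f : A -> C).
Variable p : {ffun A * B1 * B2 -> R}.

Lemma joint_S_X1_push : joint_S_X1 (push f p) = coarsen f (joint_S_X1 p).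
Proof.
apply/ffunP => -[c x1]; rewrite !ffunE /=.
under eq_bigr do rewrite ffunE /=.
by rewrite exchange_big; apply: eq_bigr => a _; rewrite ffunE.
Qed.

Lemma sum_push : \sum_t push f p t = \sum_t p t.
Proof.
rewrite !sumr_pair /=.
under eq_bigr => c _ do under eq_bigr => x1 _ do under eq_bigr => x2 _ do
  rewrite ffunE /=.
under eq_bigr => c _ do
  (rewrite exchange_big /=; under eq_bigr => x2 _ do rewrite exchange_big /=).
under eq_bigr => c _ do rewrite exchange_big /=.
rewrite [RHS](partition_big f predT) //=.
by apply: eq_bigr => c _; apply: eq_bigr => a _; exact: exchange_big.
Qed.

Hypothesis p_dist : is_dist p.

Lemma push_dist : is_dist (push f p).
Proof.
have [p_ge0 p_sum1] := p_dist.
by split=> [t|]; rewrite ?sum_push // ffunE sumr_ge0.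
Qed.

Lemma joint_S_X1_ge0 t : 0 <= joint_S_X1 p t.
Proof. by rewrite ffunE sumr_ge0 // => x2 _; case: p_dist. Qed.

End Pushforward.

Lemma markov_X1_fS_S_sufficient (R : realType) (A B1 B2 C : finType)
    (f : A -> C) (p : {ffun A * B1 * B2 -> R}) :
  sufficient f (joint_S_X1 p) -> markov_X1_fS_S f p.
Proof.
set q := joint_S_X1 p => q_suff x s c.
have joint_fS t :
    joint_X1_S_fS f p t = if f t.1.2 == t.2 then q (t.1.2, t.1.1) else 0.
  by rewrite /q !ffunE.
rewrite !joint_fS /=.
under eq_bigr do under eq_bigr do rewrite joint_fS /=.
under [X in _ = X * _]eq_bigr do rewrite joint_fS /=.
under [X in _ = _ * X]eq_bigr do rewrite joint_fS /=.
have -> : \sum_x' \sum_s' (if f s' == c then q (s', x') else 0)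
          = margL (coarsen f q) c.
  by apply: eq_bigr => x' _; rewrite ffunE /= [RHS]big_mkcond.
have -> : \sum_s' (if f s' == c then q (s', x) else 0) = coarsen f q (c, x).
  by rewrite ffunE /= [RHS]big_mkcond.
have [<-|fs_neq_c] := eqVneq (f s) c; first exact: q_suff.
by rewrite big1 ?mulr0 ?mul0r // => x' _; rewrite (negbTE fs_neq_c).
Qed.

Theorem lemma4 (R : realType) (d : nonneg_PID R) (A B1 B2 : finType)
  (p : {ffun A * B1 * B2 -> R}) (C : finType) (fstar : A -> C) :
  is_dist p ->
  UIbar_star d p = 0 ->
  SI d (push fstar p) = SIbar d p ->
  markov_X1_fS_S fstar p /\ UI1 d (push fstar p) = 0.
Proof.
move=> p_dist UIbar0 SI_fstar.
set q := joint_S_X1 p.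
have q_ge0 := joint_S_X1_ge0 p_dist.
have push_is_dist := push_dist fstar p_dist.
have MI_q : MI q = SI d (push fstar p).
  by apply/eqP; rewrite SI_fstar -subr_eq0; apply/eqP.
have decomp := PID_X1 d push_is_dist; rewrite joint_S_X1_push -/q in decomp.
have dpi := MI_coarsen_le fstar q_ge0.
have UI_ge0 := UI1_ge0 d push_is_dist.
have UI0 : UI1 d (push fstar p) = 0 by lra.
split=> //; apply/markov_X1_fS_S_sufficient/MI_coarsen_eq => //; lra.
Qed.
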